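(* Let $a\ge b\ge2$ and $k$ be integers with $k\ge a+b+2$. Then for every $(i,j)\in C_3\cup\overline{C}_3$ we have $w_1,w_4,w_5,w_6\in\mathcal{R}^k_{(a,b),(i,j)}$.
   Context: $\widehat{\mathfrak{su}}(3)_k$ fusion. Let $P_+^k=\{(\lambda_1,\lambda_2)\in\mathbb{Z}_{\ge0}^2:\lambda_1+\lambda_2\le k\}$. For $\lambda,\mu,\nu\in P_+^k$ set - $\mathcal{A}=\tfrac13[2(\lambda_1+\mu_1+\nu_2)+\lambda_2+\mu_2+\nu_1]$, - $\mathcal{B}=\tfrac13[\lambda_1+\mu_1+\nu_2+2(\lambda_2+\mu_2+\nu_1)]$, - $k_0^{\max}=\min(\mathcal{A},\mathcal{B})$, - $k_0^{\min}=\max(\lambda_1+\lambda_2,\mu_1+\mu_2,\nu_1+\nu_2,\mathcal{A}-\lambda_1,\mathcal{A}-\mu_1,\mathcal{A}-\nu_2,\mathcal{B}-\lambda_2,\mathcal{B}-\mu_2,\mathcal{B}-\nu_1)$. The fusion multiplicity is $N^{(k)\nu}_{\lambda,\mu}=\min(k_0^{\max},k)-k_0^{\min}+1$ if $\mathcal{A},\mathcal{B}$ are nonnegative integers, $k_0^{\max}\ge k_0^{\min}$ and $k\ge k_0^{\min}$; otherwise it is $0$. The set $\mathcal{R}^k_{\lambda,\mu}$ is $\{\nu\in P_+^k:N^{(k)\nu}_{\lambda,\mu}\ne0\}$. The candidate weights are $w_1=(a-1,b+2)$, $w_2=(a+2,b-1)$, $w_3=(a+1,b-2)$, $w_4=(a-2,b+1)$,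 $w_5=(a+1,b+1)$, $w_6=(a-1,b-1)$. The sets are defined by - $C_3=\{(0,3l):l\in\mathbb{Z},\ 1\le l\le\min(k-a-b-1,b-1)\}$, - $\overline{C}_3=\{(3l,0):l\in\mathbb{Z},\ 1\le l\le\min(k-a-b-1,b-1)\}$. *)

From mathcomp Require Import all_boot all_order all_algebra.
Set Implicit Arguments. Unset Strict Implicit. Unset Printing Implicit Defensive.
Import Order.TTheory GRing.Theory Num.Theory.
Local Open Scope ring_scope.

(* su(3)_k weights as pairs of integers (lambda_1, lambda_2). *)
Definition weight := (int * int)%type.

Definition inP (k : int) (l : weight) : bool :=
  (0 <= l.1) && (0 <= l.2) && (l.1 + l.2 <= k).

Definition A3 (l m n : weight) : int :=
  2 * (l.1 + m.1 + n.2) + l.2 + m.2 + n.1.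
Definition B3 (l m n : weight) : int :=
  l.1 + m.1 + n.2 + 2 * (l.2 + m.2 + n.1).

(* A and B (meaningful when 3 divides A3, B3) *)
Definition cA (l m n : weight) : int := (A3 l m n %/ 3)%Z.
Definition cB (l m n : weight) : int := (B3 l m n %/ 3)%Z.

Definition k0max (l m n : weight) : int := Num.min (cA l m n) (cB l m n).

Definition k0min (l m n : weight) : int :=
  let A := cA l m n in let B := cB l m n in
  Num.max (l.1 + l.2) (Num.max (m.1 + m.2) (Num.max (n.1 + n.2)
  (Num.max (A - l.1) (Num.max (A - m.1) (Num.max (A - n.2)
  (Num.max (B - l.2) (Num.max (B - m.2) (B - n.1)))))))).

Definition fusionN (k : int) (l m n : weight) : int :=
  if [&& (3 %| A3 l m n)%Z, (3 %| B3 l m n)%Z, 0 <= cA l m n, 0 <= cB l m n,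
        k0min l m n <= k0max l m n & k0min l m n <= k]
  then Num.min (k0max l m n) k - k0min l m n + 1
  else 0.

Definition inR (k : int) (l m n : weight) : bool :=
  inP k n && (fusionN k l m n != 0).

Definition w1 (a b : int) : weight := (a - 1, b + 2).
Definition w2 (a b : int) : weight := (a + 2, b - 1).
Definition w3 (a b : int) : weight := (a + 1, b - 2).
Definition w4 (a b : int) : weight := (a - 2, b + 1).
Definition w5 (a b : int) : weight := (a + 1, b + 1).
Definition w6 (a b : int) : weight := (a - 1, b - 1).

Definition inC3 (k a b : int) (x : weight) : Prop :=
  exists l : int, 1 <= l /\ l <= Num.min (k - a - b - 1) (b - 1) /\ x = (0, 3 * l).
Definition inC3bar (k a b : int) (x : weight) : Prop :=
  exists l : int, 1 <= l /\ l <= Num.min (k - a - b - 1) (b - 1) /\ x = (3 * l, 0).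

(* For [nu = (a + p, b + q)]
   one has [3 A = 3 (a + b) + (2 mu_1 + mu_2) + (p + 2 q)] and
   [3 B = 3 (a + b) + (mu_1 + 2 mu_2) + (2 p + q)], which are multiples of 3 for
   [mu] in [C_3] or [C_3bar] and the four shifts [(p, q)] of [w_1, w_4, w_5, w_6];
   this gives [A] and [B] explicitly, after which every condition on [k_0^min] is
   a linear inequality in [a, b, k, l]. *)
From mathcomp Require Import all_boot all_order all_algebra zify.
Import Order.TTheory GRing.Theory Num.Theory.
Local Open Scope ring_scope.

Definition k0min_at (l m n : weight) (A B : int) : int :=
  Num.max (l.1 + l.2) (Num.max (m.1 + m.2) (Num.max (n.1 + n.2)
  (Num.max (A - l.1) (Num.max (A - m.1) (Num.max (A - n.2)
  (Num.max (B - l.2) (Num.max (B - m.2) (B - n.1)))))))).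

Lemma k0minE l m n : k0min l m n = k0min_at l m n (cA l m n) (cB l m n).
Proof. by []. Qed.

Lemma fusionN_neq0 k l m n :
  (3 %| A3 l m n)%Z -> (3 %| B3 l m n)%Z -> 0 <= cA l m n -> 0 <= cB l m n ->
  k0min l m n <= k0max l m n -> k0min l m n <= k -> fusionN k l m n != 0.
Proof. by move=> hA hB hA0 hB0 hmax hk; rewrite /fusionN hA hB hA0 hB0 hmax hk /=; lia. Qed.

Lemma divz3_mul (X : int) : ((3 * X) %/ 3)%Z = X /\ (3 %| 3 * X)%Z.
Proof. by split; [rewrite mulKz | exact: dvdz_mulr]. Qed.

Lemma inR_intro k l m n (X Y : int) :
  A3 l m n = 3 * X -> B3 l m n = 3 * Y -> inP k n -> 0 <= X -> 0 <= Y ->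
  k0min_at l m n X Y <= Num.min X Y -> k0min_at l m n X Y <= k ->
  inR k l m n.
Proof.
move=> hA hB hn hX hY hmax hk.
have [cAE dA] : cA l m n = X /\ (3 %| A3 l m n)%Z by rewrite /cA hA; exact: divz3_mul.
have [cBE dB] : cB l m n = Y /\ (3 %| B3 l m n)%Z by rewrite /cB hB; exact: divz3_mul.
rewrite /inR hn; apply: fusionN_neq0; rewrite /k0max ?k0minE ?cAE ?cBE //.
Qed.

Lemma C3_in_fusion_range (a b k l : int) :
  2 <= b -> b <= a -> a + b + 2 <= k ->
  1 <= l -> l <= Num.min (k - a - b - 1) (b - 1) ->
  [/\ inR k (a, b) (0, 3 * l) (w1 a b), inR k (a, b) (0, 3 * l) (w4 a b),
      inR k (a, b) (0, 3 * l) (w5 a b) & inR k (a, b) (0, 3 * l) (w6 a b)].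
Proof.
move=> *; split;
  [ apply: (@inR_intro _ _ _ _ (a + b + l + 1) (a + b + 2 * l))
  | apply: (@inR_intro _ _ _ _ (a + b + l) (a + b + 2 * l - 1))
  | apply: (@inR_intro _ _ _ _ (a + b + l + 1) (a + b + 2 * l + 1))
  | apply: (@inR_intro _ _ _ _ (a + b + l - 1) (a + b + 2 * l - 1)) ];
  rewrite /A3 /B3 /inP /k0min_at /=; lia.
Qed.

Lemma C3bar_in_fusion_range (a b k l : int) :
  2 <= b -> b <= a -> a + b + 2 <= k ->
  1 <= l -> l <= Num.min (k - a - b - 1) (b - 1) ->
  [/\ inR k (a, b) (3 * l, 0) (w1 a b), inR k (a, b) (3 * l, 0) (w4 a b),
      inR k (a, b) (3 * l, 0) (w5 a b) & inR k (a, b) (3 * l, 0) (w6 a b)].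
Proof.
move=> *; split;
  [ apply: (@inR_intro _ _ _ _ (a + b + 2 * l + 1) (a + b + l))
  | apply: (@inR_intro _ _ _ _ (a + b + 2 * l) (a + b + l - 1))
  | apply: (@inR_intro _ _ _ _ (a + b + 2 * l + 1) (a + b + l + 1))
  | apply: (@inR_intro _ _ _ _ (a + b + 2 * l - 1) (a + b + l - 1)) ];
  rewrite /A3 /B3 /inP /k0min_at /=; lia.
Qed.

Theorem mainTheorem13 (a b k i j : int) :
  2 <= b -> b <= a -> a + b + 2 <= k ->
  (inC3 k a b (i, j) \/ inC3bar k a b (i, j)) ->
  [/\ inR k (a, b) (i, j) (w1 a b), inR k (a, b) (i, j) (w4 a b),
      inR k (a, b) (i, j) (w5 a b) & inR k (a, b) (i, j) (w6 a b)].
Proof.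
move=> hb hab hk [[l [hl1 [hl2 [-> ->]]]] | [l [hl1 [hl2 [-> ->]]]]].
- exact: C3_in_fusion_range.
- exact: C3bar_in_fusion_range.
Qed.
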